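(* Let $p > 2$ be a prime and let $z \in \mathbb{Z}/p\mathbb{Z}$. Then there exist $x, y \in \mathbb{Z}/p\mathbb{Z}$ such that $x^2 + y^2 + z^2 - xyz \equiv 0 \pmod p$ if and only if either $z \notin \{2, -2\}$ or $-1$ is a quadratic residue modulo $p$. *)

From mathcomp Require Import all_boot all_algebra.
Set Implicit Arguments. Unset Strict Implicit. Unset Printing Implicit Defensive.
Import GRing.Theory.
Local Open Scope ring_scope.

Definition quad_res (p : nat) (a : 'F_p) : Prop :=
  a != 0 /\ exists w : 'F_p, w ^+ 2 = a.

From mathcomp Require Import all_boot all_algebra all_fingroup cyclic ring.

Set Implicit Arguments.
Unset Strict Implicit.
Unset Printing Implicit Defensive.

Import GRing.Theory FinRing.Theory.
Local Open Scope ring_scope.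

(* Writing z = 2h and completing the square in x,
     x^2 + y^2 + z^2 - xyz = (x - hy)^2 + (1 - h^2) y^2 + z^2.
   If z = 2 or z = -2 then h^2 = 1, so a solution forces (x - hy)^2 = -z^2 and
   -1 is a square.  Conversely, if -1 = w^2 then (zw, 0) is a solution, and if
   h^2 <> 1 it remains to represent -z^2 by the form u^2 + d y^2 with d = 1 - h^2
   nonzero.  Squaring is at most 2-to-1, so in a finite field of odd order the
   squares fill more than half of the field, hence {u^2} and {-z^2 - d y^2}
   meet. *)

Lemma setI_neq0_card_gt (T : finType) (A B : {set T}) :
  (#|T| < #|A| + #|B|)%N -> A :&: B != set0.
Proof.
move=> ltTAB; apply: contraTneq ltTAB => AB0.
by rewrite -leqNgt -(cardsUI A B) AB0 cards0 addn0 max_card.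
Qed.

Lemma leq_card_sqr (R : finIdomainType) :
  (#|R| <= 2 * #|[set x ^+ 2 | x : R]|)%N.
Proof.
rewrite -[leqLHS]sum1_card (partition_big_imset (fun x : R => x ^+ 2)) /=.
rewrite mulnC -sum_nat_const; apply: leq_sum => _ /imsetP [r _ ->].
rewrite sum1dep_card; apply: leq_trans (_ : #|[set r; - r]| <= 2)%N.
  by apply/subset_leq_card/subsetP => x; rewrite !inE eqf_sqr.
by rewrite cards2; case: (r != - r).
Qed.

Lemma markov_form_complete_sqr (R : comPzRingType) (x y z h : R) :
  z = 2%:R * h ->
  x ^+ 2 + y ^+ 2 + z ^+ 2 - x * y * z =
    (x - h * y) ^+ 2 + (1 - h ^+ 2) * y ^+ 2 + z ^+ 2.
Proof. by move=> ->; ring. Qed.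

Lemma natr_card_finField (F : finFieldType) : #|F|%:R = 0 :> F.
Proof. by rewrite -zmodXgE -cardsT expg_cardG ?inE. Qed.

Section OddFiniteField.

Variable F : finFieldType.
Hypothesis oddF : odd #|F|.

Lemma two_neq0 : 2%:R != 0 :> F.
Proof.
apply/eqP => two0; have := natr_card_finField F.
rewrite -(odd_double_half #|F|) oddF -mul2n natrD natrM two0 mul0r addr0.
by move/eqP; rewrite oner_eq0.
Qed.

Lemma ltn_card_sqr : (#|F| < 2 * #|[set x ^+ 2 | x : F]|)%N.
Proof.
rewrite ltn_neqAle leq_card_sqr andbT.
by apply: contraTneq oddF => ->; rewrite oddM.
Qed.

Lemma sqr_add_scale_sqr_onto (c d : F) : d != 0 ->
  exists u y : F, u ^+ 2 + d * y ^+ 2 = c.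
Proof.
move=> d_neq0; set S := [set x ^+ 2 | x : F].
have cardB : #|[set c - d * s | s in S]| = #|S|.
  apply: card_in_imset => s t _ _ /eqP.
  by rewrite (inj_eq (addrI c)) eqr_opp (inj_eq (mulfI d_neq0)) => /eqP.
have : S :&: [set c - d * s | s in S] != set0.
  by apply: setI_neq0_card_gt; rewrite cardB addnn -mul2n ltn_card_sqr.
case/set0Pn => _ /setIP [/imsetP [u _ ->] /imsetP [_ /imsetP [y _ ->] uE]].
by exists u, y; rewrite uE subrK.
Qed.

Theorem markov_eq_solvable (z : F) :
  (exists x y : F, x ^+ 2 + y ^+ 2 + z ^+ 2 - x * y * z = 0) <->
  ((z != 2%:R /\ z != - 2%:R) \/ exists w : F, w ^+ 2 = -1).
Proof.
set h := z / 2%:R; have zE : z = 2%:R * h by rewrite mulrC divfK ?two_neq0.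
have z_pm2E : (z != 2%:R /\ z != - 2%:R) <-> h ^+ 2 != 1.
  rewrite -[h ^+ 2 == 1](inj_eq (mulfI (expf_neq0 2 two_neq0))).
  by rewrite mulr1 -exprMn -zE eqf_sqr negb_or; apply: rwP andP.
split=> [[x [y]] | [/z_pm2E h2_neq1 | [w w2E]]].
- rewrite (markov_form_complete_sqr x y zE).
  have [h2E | /z_pm2E] := eqVneq (h ^+ 2) 1; last by left.
  rewrite h2E subrr mul0r addr0 => /eqP; rewrite addr_eq0 => /eqP sqrE.
  have z2_neq0 : z ^+ 2 != 0 by rewrite zE exprMn h2E mulr1 expf_neq0 ?two_neq0.
  by right; exists ((x - h * y) / z); rewrite expr_div_n sqrE mulNr divff.
- have d_neq0 : 1 - h ^+ 2 != 0 by rewrite subr_eq0 eq_sym.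
  have [u [y uyE]] := sqr_add_scale_sqr_onto (- z ^+ 2) d_neq0.
  exists (u + h * y), y.
  by rewrite (markov_form_complete_sqr _ _ zE) addrK uyE addNr.
- by exists (z * w), 0; rewrite exprMn w2E; ring.
Qed.

End OddFiniteField.

Theorem lemma1 (p : nat) (hp : prime p) (hp2 : (2 < p)%N) (z : 'F_p) :
  (exists x y : 'F_p, x ^+ 2 + y ^+ 2 + z ^+ 2 - x * y * z = 0) <->
  ((z != 2%:R /\ z != - 2%:R) \/ quad_res (- 1 : 'F_p)).
Proof.
have oddF : odd #|'F_p|.
  by rewrite card_Fp //; case: (even_prime hp) => [p2 | //]; rewrite p2 in hp2.
rewrite (markov_eq_solvable oddF) /quad_res.
have m1_neq0 : (-1 : 'F_p) != 0 by rewrite oppr_eq0 oner_eq0.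
by split=> [[pm2 | w] | [pm2 | [_ w]]]; [left | right | left | right].
Qed.
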